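(* Let $p\in[1,\infty]$ and let $(X,d,\mu)$ be a metric measure space which is $p$-thick quasiconvex with constant $C\ge1$. Then $d_p$ is a metric on $X$ and $d\le d_p\le Cd$.
   Context: A metric measure space is a proper metric space with a Borel regular outer measure positive and finite on balls. $\operatorname{Mod}_p\Gamma=\inf\int\rho^pd\mu$ (for $p<\infty$), $\operatorname{Mod}_\infty\Gamma=\inf\|\rho\|_{L^\infty}$, over Borel $\rho\ge0$ with $\int_\gamma\rho\ge1$ on $\Gamma$. $\Gamma(E,F;C)$ is the family of curves $\gamma:[0,1]\to X$ with $\gamma(0)\in E,\gamma(1)\in F,\ell(\gamma)\le Cd(\gamma(0),\gamma(1))$; $X$ is $p$-thick quasiconvex with constant $C$ if $\operatorname{Mod}_p\Gamma(E,F;C)>0$ for all measurable $E,F$ of positive measure. With $\Gamma(E,F)$ the Lipschitz curves $[0,1]\to X$ from $E$ to $F$, set $ess\ell_p(\Gamma):=\sup_{\operatorname{Mod}_p\Gamma_0=0}\inf\{\ell(\gamma):\gamma\in\Gamma\setminus\Gamma_0\}$ ($\inf\emptyset=\infty$), $d_p'(x,y):=\lim_{\delta\to0}ess\ell_p\Gamma(\bar B(x,\delta),\bar B(y,\delta))$, and $d_p(x,y):=\inf\{\sum_{i=1}^nd_p'(x_{i-1},x_i):n\in\mathbb N,x_0=x,x_n=y\}$. *)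

From HB Require Import structures.
From mathcomp Require Import all_boot all_order all_algebra.
From mathcomp Require Import all_classical all_reals all_analysis measurable_realfun ess_sup_inf.
Set Implicit Arguments. Unset Strict Implicit. Unset Printing Implicit Defensive.
Import Order.TTheory GRing.Theory Num.Theory.
Import numFieldNormedType.Exports.
Local Open Scope classical_set_scope.
Local Open Scope ring_scope.

Section defs.
Context {R : realType} {X : pointedType}.
Variable dist : X -> X -> R.

Definition is_metric : Prop :=
  [/\ (forall x y, 0 <= dist x y),
      (forall x y, dist x y = 0 <-> x = y),
      (forall x y, dist x y = dist y x) &
      (forall x y z, dist x z <= dist x y + dist y z)].

Definition ball_d (x : X) (r : R) : set X := [set y | dist x y < r].
Definition cball_d (x : X) (r : R) : set X := [set y | dist x y <= r].

Definition open_d (U : set X) : Prop :=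
  forall x, U x -> exists2 r : R, 0 < r & ball_d x r `<=` U.

Definition borel_d : set (set X) := <<s [set U | open_d U] >>.

Definition compact_d (K : set X) : Prop :=
  forall G : set (set X), (forall U, G U -> open_d U) ->
    K `<=` \bigcup_(U in G) U ->
    exists2 F : set (set X), finite_set F & F `<=` G /\ K `<=` \bigcup_(U in F) U.

Definition proper_d : Prop := forall x r, compact_d (cball_d x r).

Definition borel_fun (f : X -> \bar R) : Prop :=
  forall B : set (\bar R), measurable B -> borel_d (f @^-1` B).

Variable mu : {outer_measure set X -> \bar R}.

Definition borel_regular : Prop :=
  (forall B, borel_d B -> mu.-caratheodory B) /\
  (forall A : set X, exists B, [/\ borel_d B, A `<=` B & mu A = mu B]).

Definition metric_measure_space : Prop :=
  [/\ is_metric, proper_d, borel_regular &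
      (forall x r, 0 < r -> (0 < mu (ball_d x r) < +oo)%E)].

(** * Curves.  A curve [gamma : [0,1] -> X] is represented by a function
    [R -> X] of which only the values on [0,1] matter. *)
Definition curve (g : R -> X) : Prop :=
  forall t, 0 <= t <= 1 -> forall e, 0 < e -> exists2 del, 0 < del &
    forall s, 0 <= s <= 1 -> `|s - t| < del -> dist (g s) (g t) < e.

Definition lipschitz_curve (g : R -> X) : Prop :=
  exists L : R, forall s t, 0 <= s <= 1 -> 0 <= t <= 1 ->
    dist (g s) (g t) <= L * `|s - t|.

Definition len_on (g : R -> X) (a b : R) : \bar R :=
  ereal_sup [set v | exists (n : nat) (t : nat -> R),
    [/\ t 0%N = a, t n = b, (forall i, (i < n)%N -> t i <= t i.+1) &
        v = (\sum_(i < n) dist (g (t i)) (g (t i.+1)))%:E]].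

Definition len (g : R -> X) : \bar R := len_on g 0 1.

(** arc-length parametrization [g_s : [0, len g] -> X], g_s (s_g t) = g t *)
Definition arcpar (g : R -> X) (s : R) : X :=
  g (xget 0 [set t | 0 <= t <= 1 /\ len_on g 0 t = s%:E]).

Definition line_int (g : R -> X) (rho : X -> \bar R) : \bar R :=
  (\int[@lebesgue_measure R]_(s in `[0%R, fine (len g)]) rho (arcpar g s))%E.

Definition admissible (Gam : set (R -> X)) (rho : X -> \bar R) : Prop :=
  [/\ (forall x, (0 <= rho x)%E), borel_fun rho &
      (forall g, Gam g -> (1 <= line_int g rho)%E)].

Definition Mod (p : \bar R) (Gam : set (R -> X)) : \bar R :=
  ereal_inf [set m | exists rho, admissible Gam rho /\
    m = if p == +oo%E then ess_sup (mu : set (caratheodory_type mu) -> \bar R) rho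
        else (\int[mu : set (caratheodory_type mu) -> \bar R]_x (rho x `^ fine p))%E].

Definition GamC (E F : set X) (C : R) : set (R -> X) :=
  [set g | [/\ curve g, E (g 0), F (g 1) & (len g <= (C * dist (g 0) (g 1))%:E)%E]].

Definition GamL (E F : set X) : set (R -> X) :=
  [set g | [/\ lipschitz_curve g, E (g 0) & F (g 1)]].

Definition thick_quasiconvex (p : \bar R) (C : R) : Prop :=
  forall E F : set X, mu.-caratheodory E -> mu.-caratheodory F ->
    (0 < mu E)%E -> (0 < mu F)%E -> (0 < Mod p (GamC E F C))%E.

Definition essl (p : \bar R) (Gam : set (R -> X)) : \bar R :=
  ereal_sup [set v | exists Gam0 : set (R -> X), Mod p Gam0 = 0%E /\
    v = ereal_inf [set len g | g in Gam `\` Gam0]].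

Definition dp' (p : \bar R) (x y : X) : \bar R :=
  lim ((fun del : R => essl p (GamL (cball_d x del) (cball_d y del))) @ 0^'+).

Definition dp (p : \bar R) (x y : X) : \bar R :=
  ereal_inf [set v | exists (n : nat) (xs : nat -> X),
    [/\ (0 < n)%N, xs 0%N = x, xs n = y &
        v = (\sum_(i < n) dp' p (xs i) (xs i.+1))%E]].

End defs.

Definition is_metric_e {R : realType} {X : Type} (f : X -> X -> \bar R) : Prop :=
  [/\ (forall x y, f x y \is a fin_num),
      (forall x y, (0 <= f x y)%E),
      (forall x y, f x y = 0%E <-> x = y),
      (forall x y, f x y = f y x) &
      (forall x y z, (f x z <= f x y + f y z)%E)].

(* Every Lipschitz curve from the closed ball B(x, del) to B(y, del) has length at least
   d(x, y) - 2 del, so d <= d_p'.  Conversely, p-thick quasiconvexity makes the family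
   Gamma(B(x, del), B(y, del); C) of positive modulus, so no null family contains the
   constant-speed reparametrizations of all its curves; these are Lipschitz, have the same
   line integrals, and have length at most C (d(x, y) + 2 del), whence d_p' <= C d.
   Reversing curves preserves lengths and line integrals, which makes d_p' symmetric, and
   the chain infimum d_p of d_p' inherits both bounds and is a metric. *)

From HB Require Import structures.
From mathcomp Require Import all_boot all_order all_algebra.
From mathcomp Require Import all_classical all_reals all_analysis measurable_realfun ess_sup_inf.
From mathcomp Require Import lra ring.
Import Order.TTheory GRing.Theory Num.Theory.
Import numFieldNormedType.Exports.
Local Open Scope classical_set_scope.
Local Open Scope ring_scope.
Set Implicit Arguments. Unset Strict Implicit. Unset Printing Implicit Defensive.

Lemma path_le_last d (T : porderType d) (a : T) s :
  path <=%O a s -> (a <= last a s)%O.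
Proof.
elim: s a => [|y s IH] a //= /andP[ay py].
exact: le_trans ay (IH _ py).
Qed.

Lemma path_le_mem d (T : porderType d) (a : T) s :
  path <=%O a s -> forall u, u \in s -> (a <= u <= last a s)%O.
Proof.
elim: s a => [|y s IH] a //= /andP[ay py] u; rewrite inE => /orP[/eqP ->|us].
  by rewrite ay path_le_last.
by have /andP[yu ->] := IH _ py _ us; rewrite (le_trans ay yu).
Qed.

Lemma last_rev_belast T (x : T) s : last (last x s) (rev (belast x s)) = x.
Proof.
elim/last_ind: s => [|s y _] //=.
by rewrite last_rcons belast_rcons rev_cons last_rcons.
Qed.

Lemma ereal_supD_le {R : realType} (A B : set R) (c : \bar R) :
  A !=set0 -> B !=set0 -> (forall x y, A x -> B y -> (x + y)%:E <= c)%E ->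
  (ereal_sup (EFin @` A) + ereal_sup (EFin @` B) <= c)%E.
Proof.
move=> [x0 Ax0] [y0 By0] H.
case: c H => [r| |] H; last 2 first.
- by rewrite leey.
- by have := H _ _ Ax0 By0.
have supA y : B y -> (ereal_sup (EFin @` A) <= (r - y)%:E)%E.
  move=> By; apply: ge_ereal_sup => _ [x Ax <-]; rewrite lee_fin lerBrDr.
  by have := H _ _ Ax By; rewrite lee_fin.
have supA0 : (x0%:E <= ereal_sup (EFin @` A))%E by apply: ereal_sup_ubound; exists x0.
have : ereal_sup (EFin @` A) \is a fin_num.
  by rewrite fin_numElt (lt_le_trans _ supA0) ?ltNyr // (le_lt_trans (supA _ By0)) ?ltry.
move: supA supA0; case: (ereal_sup _) => // sA supA _ _.
have supB : (ereal_sup (EFin @` B) <= (r - sA)%:E)%E.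
  apply: ge_ereal_sup => _ [y By <-]; rewrite lee_fin lerBrDl.
  by have := supA _ By; rewrite lee_fin lerBrDr addrC.
by rewrite (le_trans (leeD2l _ supB)) // -EFinD lee_fin addrC subrK.
Qed.

Definition clamp01 {R : realType} (t : R) : R :=
  if t <= 0 then 0 else if 1 <= t then 1 else t.

Section clamp01_theory.
Context {R : realType}.
Implicit Types t u : R.

Lemma clamp01P t : (clamp01 t = 0 /\ t <= 0) \/ (clamp01 t = t /\ 0 <= t <= 1) \/
  (clamp01 t = 1 /\ 1 <= t).
Proof.
rewrite /clamp01; case: ifP => t0; first by left.
case: ifP => t1; first by right; right.
right; left; split => //; move/negbT: t0; move/negbT: t1.
by rewrite -!ltNge => ? ?; rewrite !ltW.
Qed.

Lemma clamp01_itv t : 0 <= clamp01 t <= 1.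
Proof. by case: (clamp01P t) => [[-> _]|[[-> ->]|[-> _]]] //; rewrite ler01 lexx. Qed.

Lemma clamp01_id t : 0 <= t -> t <= 1 -> clamp01 t = t.
Proof. by move=> t0 t1; case: (clamp01P t) => [[-> ?]|[[-> _]|[-> ?]]] //; lra. Qed.

Lemma clamp01_lt t u d : `|t - u| < d -> `|clamp01 t - clamp01 u| < d.
Proof.
rewrite !ltr_norml => /andP[h1 h2].
case: (clamp01P t) => [[-> ?]|[[-> /andP[? ?]]|[-> ?]]];
case: (clamp01P u) => [[-> ?]|[[-> /andP[? ?]]|[-> ?]]]; apply/andP; split; lra.
Qed.

End clamp01_theory.

Lemma ge0_integral_reflect {R : realType} (L : R) (F : R -> \bar R) :
  measurable_fun `[0%R, L] F -> (forall s, 0 <= F s)%E ->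
  (\int[lebesgue_measure]_(s in `[0%R, L]) F (L - s)%R =
   \int[lebesgue_measure]_(s in `[0%R, L]) F s)%E.
Proof.
move=> mF F0.
pose phi : measurableTypeR R -> measurableTypeR R := fun s => L - s.
have mphi : measurable_fun setT phi by apply: measurable_funB => //; exact: measurable_cst.
have phi_itv (a b : R) : phi @^-1` `[a, b]%classic = `[L - b, L - a]%classic.
  by apply/seteqP; split => x /=; rewrite /phi !in_itv /= => /andP[? ?]; apply/andP; split; lra.
have phi_lebesgue A : measurable A -> lebesgue_measure A = pushforward lebesgue_measure phi A.
  apply: lebesgue_measure_unique => _ [[a b] _ <-] /=; rewrite /pushforward.
  have -> : phi @^-1` `]a, b]%classic = `[L - b, L - a[%classic.
    by apply/seteqP; split => x /=; rewrite /phi !in_itv /= => /andP[? ?]; apply/andP; split; lra.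
  rewrite !lebesgue_measure_itv /= !lte_fin ltrD2l ltrN2.
  by case: ifP => // _; rewrite -!EFinD; congr EFin; ring.
rewrite [RHS](eq_measure_integral (pushforward lebesgue_measure phi)); last first.
  by move=> A mA _; exact: phi_lebesgue.
by rewrite ge0_integral_pushforward // phi_itv subrr subr0.
Qed.

Section metric_curves.
Context {R : realType} {X : pointedType} (dist : X -> X -> R).
Hypothesis dist_ge0 : forall x y, 0 <= dist x y.
Hypothesis dist_sym : forall x y, dist x y = dist y x.
Hypothesis dist_triangle : forall x y z, dist x z <= dist x y + dist y z.
Hypothesis dist_refl : forall x, dist x x = 0.
Hypothesis dist_sep : forall x y, dist x y = 0 -> x = y.

Implicit Types g : R -> X.

(** * Length of curves *)

Fixpoint chordlen g (a : R) (s : seq R) : R :=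
  if s is b :: s' then dist (g a) (g b) + chordlen g b s' else 0.

Definition subdivision (a b : R) : set (seq R) :=
  [set s | path <=%R a s /\ last a s = b].

Lemma chordlen_nth g x0 a s : chordlen g a s =
  \sum_(i < size s) dist (g (nth x0 (a :: s) i)) (g (nth x0 (a :: s) i.+1)).
Proof.
elim: s a => [|y s IH] a /=; first by rewrite big_ord0.
by rewrite big_ord_recl /= IH.
Qed.

Lemma chordlen_iota g (t : nat -> R) n m :
  chordlen g (t m) [seq t i | i <- iota m.+1 n] =
  \sum_(m <= i < m + n) dist (g (t i)) (g (t i.+1)).
Proof.
elim: n m => [|n IH] m /=; first by rewrite addn0 big_geq.
by rewrite IH big_ltn ?addnS ?ltnS ?leq_addr // addSn.
Qed.

Lemma subdivision_iota (t : nat -> R) n :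
  (forall i, (i < n)%N -> t i <= t i.+1) ->
  subdivision (t 0%N) (t n) [seq t i | i <- iota 1 n].
Proof.
suff gen m : (forall i, (i < m + n)%N -> t i <= t i.+1) ->
    subdivision (t m) (t (m + n)%N) [seq t i | i <- iota m.+1 n] by exact: gen 0%N.
elim: n m => [|n IH] m tm; first by rewrite addn0.
have tmS : forall i, (i < m.+1 + n)%N -> t i <= t i.+1 by move=> i; rewrite addSnnS; exact: tm.
have [p l] := IH _ tmS; rewrite addSnnS in l.
by split => //=; rewrite tm ?addnS ?ltnS ?leq_addr.
Qed.

Lemma len_onE g a b : len_on dist g a b =
  ereal_sup [set (chordlen g a s)%:E | s in subdivision a b].
Proof.
rewrite /len_on; congr ereal_sup; apply/seteqP; split => v.
  move=> [n [t [t0 tn tm ->]]].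
  exists [seq t i | i <- iota 1 n]; first by rewrite -t0 -tn; exact: subdivision_iota.
  by rewrite -t0 chordlen_iota big_mkord.
move=> [s [ps ls] <-]; exists (size s), (fun i => nth a (a :: s) i); split => //.
- by rewrite -last_nth.
- by move=> i ilt; move/(pathP a): ps => /(_ i ilt).
- by rewrite (chordlen_nth _ a).
Qed.

Lemma chordlen_cat g a s1 s2 :
  chordlen g a (s1 ++ s2) = chordlen g a s1 + chordlen g (last a s1) s2.
Proof. by elim: s1 a => [|y s IH] a /=; rewrite ?add0r // IH addrA. Qed.

Lemma chordlen_map g h a s :
  chordlen g (h a) [seq h u | u <- s] = chordlen (g \o h) a s.
Proof. by elim: s a => [|y s IH] a //=; rewrite IH. Qed.

Lemma eq_chordlen g1 g2 a s : {in a :: s, g1 =1 g2} ->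
  chordlen g1 a s = chordlen g2 a s.
Proof.
elim: s a => [|y s IH] a //= H.
rewrite !H ?inE ?eqxx ?orbT // IH // => u us; apply: H.
by rewrite inE us orbT.
Qed.

Lemma chordlen_rev g a s : chordlen g a s = chordlen g (last a s) (rev (belast a s)).
Proof.
elim: s a => [|y s IH] a //=.
by rewrite rev_cons -cats1 chordlen_cat /= IH addr0 last_rev_belast addrC dist_sym.
Qed.

Lemma subdivision1 a b : a <= b -> subdivision a b [:: b].
Proof. by move=> ab; split => //=; rewrite ab. Qed.

Lemma subdivision_cat a m b s1 s2 :
  subdivision a m s1 -> subdivision m b s2 -> subdivision a b (s1 ++ s2).
Proof.
move=> [p1 l1] [p2 l2]; split; first by rewrite cat_path p1 l1 p2.
by rewrite last_cat l1.
Qed.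

Lemma chordlen_le_shift g t0 s : path <=%R t0 s ->
  exists2 del : R, 0 < del & forall t, t0 <= t -> t < t0 + del -> t <= last t0 s ->
  exists2 s2, subdivision t (last t0 s) s2 &
    chordlen g t0 s <= dist (g t0) (g t) + chordlen g t s2.
Proof.
elim: s => [|y s IH] /=.
  move=> _; exists 1 => // t t0t _ tt0.
  have -> : t = t0 by apply/eqP; rewrite eq_le tt0 t0t.
  by exists [::]; [split | rewrite /= addr0 dist_ge0].
move=> /andP[t0y py].
have [yt0|t0y'] := leP y t0.
  have ey : y = t0 by apply/eqP; rewrite eq_le yt0 t0y.
  rewrite ey in py *; have [del del0 H] := IH py.
  by exists del => // t t0t tlt tl; rewrite dist_refl add0r; exact: H.
exists (y - t0); first by rewrite subr_gt0.
move=> t t0t tlt _; rewrite addrC subrK in tlt; exists (y :: s).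
  by split => //=; rewrite py andbT ltW.
by rewrite /= addrA lerD2r dist_triangle.
Qed.

Lemma subdivision_split g m a s : path <=%R a s -> a <= m -> m <= last a s ->
  exists s1 s2, [/\ subdivision a m s1, subdivision m (last a s) s2 &
    chordlen g a s <= chordlen g a s1 + chordlen g m s2].
Proof.
elim: s a => [|y s IH] a /=.
  move=> _ am ma; have -> : m = a by apply/eqP; rewrite eq_le ma am.
  by exists [::], [::]; split => //=; rewrite addr0.
move=> /andP[ay py] am mlast.
have [my|ym] := leP m y.
  exists [:: m], (y :: s); split.
  - exact: subdivision1.
  - by split => //=; rewrite my py.
  - by rewrite /= addr0 addrA lerD2r dist_triangle.
have [s1 [s2 [[p1 l1] p2 le]]] := IH _ py (ltW ym) mlast.
exists (y :: s1), s2; split => //.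
- by split => //=; rewrite ay p1.
- by rewrite /= -addrA lerD2l.
Qed.

Lemma chordlen_le_len_on g a b s :
  subdivision a b s -> ((chordlen g a s)%:E <= len_on dist g a b)%E.
Proof. by move=> ps; rewrite len_onE; apply: ereal_sup_ubound; exists s. Qed.

Lemma dist_le_len_on g a b : a <= b -> ((dist (g a) (g b))%:E <= len_on dist g a b)%E.
Proof.
move=> ab; apply: le_trans (chordlen_le_len_on g (subdivision1 ab)).
by rewrite /= addr0.
Qed.

Lemma len_on_ge0 g a b : a <= b -> (0 <= len_on dist g a b)%E.
Proof. by move=> ab; apply: le_trans (dist_le_len_on g ab); rewrite lee_fin. Qed.

Lemma len_on_add g a m b : a <= m -> m <= b ->
  len_on dist g a b = (len_on dist g a m + len_on dist g m b)%E.
Proof.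
move=> am mb; apply/eqP; rewrite eq_le; apply/andP; split.
  rewrite len_onE; apply: ge_ereal_sup => _ [s [ps ls] <-].
  have mls : m <= last a s by rewrite ls.
  have [s1 [s2 [p1 p2 le]]] := subdivision_split g ps am mls.
  rewrite ls in p2.
  apply: le_trans (leeD (chordlen_le_len_on g p1) (chordlen_le_len_on g p2)).
  by rewrite -EFinD lee_fin.
rewrite !len_onE -(image_comp (chordlen g a) EFin) -(image_comp (chordlen g m) EFin).
apply: ereal_supD_le.
- by exists (chordlen g a [:: m]), [:: m]; first exact: subdivision1.
- by exists (chordlen g m [:: b]), [:: b]; first exact: subdivision1.
move=> _ _ [s1 p1 <-] [s2 p2 <-].
rewrite -len_onE; apply: le_trans (chordlen_le_len_on g (subdivision_cat p1 p2)).
by rewrite chordlen_cat (proj2 p1).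
Qed.

Lemma len_on_id g a : len_on dist g a a = 0%E.
Proof.
apply/eqP; rewrite eq_le len_on_ge0 // andbT len_onE.
apply: ge_ereal_sup => _ [s [ps ls] <-]; rewrite lee_fin.
suff -> : chordlen g a s = 0 by [].
elim: s ps ls => [|y s IH] //= /andP[ay py] ly.
have ya : y = a by apply/eqP; rewrite eq_le ay andbT -[leRHS]ly path_le_last.
by rewrite ya in py ly *; rewrite dist_refl add0r IH.
Qed.

Lemma len_on_le_lipschitz g K a b : a <= b ->
  (forall u v, a <= u -> u <= v -> v <= b -> dist (g u) (g v) <= K * (v - u)) ->
  (len_on dist g a b <= (K * (b - a))%:E)%E.
Proof.
move=> ab gK; rewrite len_onE; apply: ge_ereal_sup => _ [s [ps ls] <-].
rewrite lee_fin -ls.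
suff gen c s' : a <= c -> path <=%R c s' -> last c s' <= b ->
    chordlen g c s' <= K * (last c s' - c) by apply: gen; rewrite ?ls.
elim: s' c => [|y s' IH] c /= ac; first by rewrite subrr mulr0.
move=> /andP[cy py] lb; have yl := path_le_last py.
rewrite (le_trans (lerD (gK c y ac cy (le_trans yl lb)) (IH y (le_trans ac cy) py lb))) //.
by rewrite -mulrDr addrC addrA subrK.
Qed.

Lemma len_on_le_comp g g' (phi : R -> R) a b : a <= b ->
  {in `[a, b]%R &, {homo phi : u v / u <= v}} -> {in `[a, b]%R, forall w, g' (phi w) = g w} ->
  (len_on dist g a b <= len_on dist g' (phi a) (phi b))%E.
Proof.
move=> ab phi_homo gg'; rewrite [X in (X <= _)%E]len_onE.
apply: ge_ereal_sup => _ [s [ps ls] <-].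
have sab : all (mem `[a, b]%R) (a :: s).
  apply/allP => w; rewrite in_cons => /orP[/eqP ->|ws]; rewrite inE in_itv /=.
    by rewrite lexx ab.
  by rewrite -ls; exact: path_le_mem ps _ ws.
have hs : subdivision (phi a) (phi b) [seq phi u | u <- s].
  by split; [exact: homo_path_in phi_homo sab ps | rewrite (last_map phi) ls].
apply: le_trans (chordlen_le_len_on g' hs); rewrite lee_fin chordlen_map.
by rewrite (eq_chordlen (g2 := g)) // => w /(allP sab) /gg'.
Qed.

Definition rev_curve g : R -> X := fun t => g (1 - t).

Lemma rev_curveK : involutive rev_curve.
Proof. by move=> g; apply/funext => t; rewrite /rev_curve subKr. Qed.

Lemma len_on_rev_le g a b :
  (len_on dist (rev_curve g) a b <= len_on dist g (1 - b) (1 - a))%E.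
Proof.
rewrite [X in (X <= _)%E]len_onE; apply: ge_ereal_sup => _ [s [ps ls] <-].
set h := fun u : R => 1 - u.
have hs : subdivision (1 - b) (1 - a) [seq h u | u <- rev (belast a s)].
  split; last by rewrite -ls (last_map h) last_rev_belast.
  rewrite -ls; apply: (homo_path (e := fun z y => y <= z)); last by rewrite rev_path.
  by move=> x y yx; rewrite lerD2l lerN2.
apply: le_trans (chordlen_le_len_on g hs); rewrite lee_fin.
rewrite (_ : rev_curve g = g \o h) // -chordlen_map chordlen_rev.
by rewrite (last_map h) (belast_map h) -map_rev ls.
Qed.

Lemma len_on_rev g a b :
  len_on dist (rev_curve g) a b = len_on dist g (1 - b) (1 - a).
Proof.
apply/eqP; rewrite eq_le len_on_rev_le /=.
by have := len_on_rev_le (rev_curve g) (1 - b) (1 - a); rewrite !subKr rev_curveK.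
Qed.

(** * Arc length and arc-length parametrization *)

Definition arclen g t := fine (len_on dist g 0 t).

Section rectifiable_curve.
Variables (g : R -> X) (L : R).
Hypothesis gL : len_on dist g 0 1 = L%:E.

Lemma len_on_fin a b : 0 <= a -> a <= b -> b <= 1 -> len_on dist g a b \is a fin_num.
Proof.
move=> a0 ab b1; have : len_on dist g 0 1 \is a fin_num by rewrite gL.
rewrite (len_on_add g a0 (le_trans ab b1)) (len_on_add g ab b1).
by rewrite !fin_numD => /and3P[].
Qed.

Lemma len_on_arclen a b : 0 <= a -> a <= b -> b <= 1 ->
  len_on dist g a b = (arclen g b - arclen g a)%:E.
Proof.
move=> a0 ab b1.
have fa := len_on_fin (lexx 0) a0 (le_trans ab b1).
have fab := len_on_fin a0 ab b1.
rewrite /arclen (len_on_add g a0 ab) fineD //.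
by rewrite addrAC subrr add0r fineK.
Qed.

Lemma arclen0 : arclen g 0 = 0.
Proof. by rewrite /arclen len_on_id. Qed.

Lemma arclen1 : arclen g 1 = L.
Proof. by rewrite /arclen gL. Qed.

Lemma len_on0 t : 0 <= t -> t <= 1 -> len_on dist g 0 t = (arclen g t)%:E.
Proof. by move=> t0 t1; rewrite (len_on_arclen (lexx 0) t0 t1) arclen0 subr0. Qed.

Lemma arclen_le a b : 0 <= a -> a <= b -> b <= 1 -> arclen g a <= arclen g b.
Proof.
move=> a0 ab b1; have := len_on_ge0 g ab.
by rewrite (len_on_arclen a0 ab b1) lee_fin subr_ge0.
Qed.

Lemma dist_le_arclen a b : 0 <= a -> a <= b -> b <= 1 ->
  dist (g a) (g b) <= arclen g b - arclen g a.
Proof.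
by move=> a0 ab b1; have := dist_le_len_on g ab;
  rewrite (len_on_arclen a0 ab b1) lee_fin.
Qed.

Lemma eq_arclen_point t1 t2 : 0 <= t1 <= 1 -> 0 <= t2 <= 1 ->
  arclen g t1 = arclen g t2 -> g t1 = g t2.
Proof.
wlog t12 : t1 t2 / t1 <= t2.
  move=> W t1I t2I E; have [h|h] := leP t1 t2; first exact: W.
  by apply/esym/W => //; exact: ltW.
move=> /andP[t10 _] /andP[_ t21] E; apply: dist_sep; apply/eqP.
by rewrite eq_le dist_ge0 andbT (le_trans (dist_le_arclen t10 t12 t21)) // E subrr.
Qed.

(* Choose a subdivision of [t0, 1] whose chord length is almost [len_on g t0 1]; for [t]
   close enough to [t0], restarting it at [t] loses at most [dist (g t0) (g t)]. *)
Lemma arclen_right_cont t0 : curve dist g -> 0 <= t0 -> t0 <= 1 ->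
  forall e, 0 < e -> exists2 del, 0 < del & forall t, t0 <= t -> t < t0 + del -> t <= 1 ->
  arclen g t - arclen g t0 <= e.
Proof.
move=> cg t00 t01 e e0.
have e2 : 0 < e / 2 by rewrite divr_gt0.
have : ((arclen g 1 - arclen g t0 - e / 2)%:E < len_on dist g t0 1)%E.
  by rewrite (len_on_arclen t00 t01 (lexx 1)) lte_fin; lra.
rewrite len_onE => /ereal_sup_gt[_ [s [ps ls] <-]]; rewrite lte_fin => hs.
have t0I : 0 <= t0 <= 1 by rewrite t00 t01.
have [d1 d10 Hd1] := cg t0 t0I _ e2.
have [d2 d20 Hd2] := chordlen_le_shift g ps.
exists (Num.min d1 d2) => [|t t0t tlt t1]; first by rewrite lt_min d10 d20.
have td1 : `|t - t0| < d1.
  rewrite ger0_norm ?subr_ge0 // ltrBlDl (lt_le_trans tlt) // lerD2l.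
  by rewrite ge_min lexx.
have td2 : t < t0 + d2 by rewrite (lt_le_trans tlt) // lerD2l ge_min lexx orbT.
have tI : 0 <= t <= 1 by rewrite t1 (le_trans t00 t0t).
have gt0t := Hd1 t tI td1; rewrite dist_sym in gt0t.
have tl : t <= last t0 s by rewrite ls.
have [s2 ps2 hs2] := Hd2 t t0t td2 tl; rewrite ls in ps2.
have := chordlen_le_len_on g ps2.
rewrite (len_on_arclen (le_trans t00 t0t) t1 (lexx 1)) lee_fin.
lra.
Qed.

End rectifiable_curve.

Lemma curve_rev g : curve dist g -> curve dist (rev_curve g).
Proof.
move=> cg t /andP[t0 t1] e e0.
have t'I : 0 <= 1 - t <= 1 by apply/andP; split; lra.
have [del del0 H] := cg (1 - t) t'I e e0.
exists del => // s /andP[s0 s1] st; apply: H; first by apply/andP; split; lra.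
by rewrite (_ : 1 - s - (1 - t) = t - s) 1?distrC //; ring.
Qed.

Lemma len_rev_curve g : len_on dist (rev_curve g) 0 1 = len_on dist g 0 1.
Proof. by rewrite len_on_rev subrr subr0. Qed.

Lemma arclen_rev g L t : len_on dist g 0 1 = L%:E -> 0 <= t -> t <= 1 ->
  arclen (rev_curve g) t = L - arclen g (1 - t).
Proof.
move=> gL t0 t1; rewrite {1}/arclen len_on_rev subr0.
by rewrite (len_on_arclen gL) /= ?(arclen1 gL) //; lra.
Qed.

Lemma arclen_left_cont g L t0 : curve dist g -> len_on dist g 0 1 = L%:E ->
  0 <= t0 -> t0 <= 1 -> forall e, 0 < e -> exists2 del, 0 < del &
  forall t, t <= t0 -> t0 - del < t -> 0 <= t -> arclen g t0 - arclen g t <= e.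
Proof.
move=> cg gL t00 t01 e e0.
have gL' : len_on dist (rev_curve g) 0 1 = L%:E by rewrite len_rev_curve.
have r0 : 0 <= 1 - t0 by lra.
have r1 : 1 - t0 <= 1 by lra.
have [del del0 H] := arclen_right_cont gL' (curve_rev cg) r0 r1 e0.
exists del => // t tt0 tlt t0'.
have u0 : 0 <= 1 - t by lra.
have u1 : 1 - t <= 1 by lra.
have := H (1 - t) ltac:(lra) ltac:(lra) ltac:(lra).
by rewrite (arclen_rev gL u0 u1) (arclen_rev gL r0 r1) !subKr; lra.
Qed.

Lemma arclen_cont g L t0 : curve dist g -> len_on dist g 0 1 = L%:E ->
  0 <= t0 -> t0 <= 1 -> forall e, 0 < e -> exists2 del, 0 < del &
  forall t, 0 <= t -> t <= 1 -> `|t - t0| < del -> `|arclen g t - arclen g t0| <= e.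
Proof.
move=> cg gL t00 t01 e e0.
have [d1 d10 H1] := arclen_right_cont gL cg t00 t01 e0.
have [d2 d20 H2] := arclen_left_cont cg gL t00 t01 e0.
exists (Num.min d1 d2) => [|t t0' t1]; first by rewrite lt_min d10 d20.
rewrite lt_min !ltr_norml => /andP[/andP[ta tb] /andP[tc td]].
have [tt0|t0t] := leP t t0.
  have := H2 t tt0 ltac:(lra) t0'; have := arclen_le gL t0' tt0 t01.
  by rewrite ler_norml; lra.
have := H1 t (ltW t0t) ltac:(lra) t1; have := arclen_le gL t00 (ltW t0t) t1.
by rewrite ler_norml; lra.
Qed.

Lemma arclen_ivt g L v : curve dist g -> len_on dist g 0 1 = L%:E -> 0 <= v -> v <= L ->
  exists t, [/\ 0 <= t, t <= 1 & arclen g t = v].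
Proof.
move=> cg gL v0 vL.
have fc : continuous (arclen g \o clamp01).
  move=> x; apply/cvgrPdist_le => e e0; apply/nbhs_normP.
  have /andP[c0 c1] := clamp01_itv x.
  have [del del0 H] := arclen_cont cg gL c0 c1 e0.
  exists del => // t /= xt; have /andP[ct0 ct1] := clamp01_itv t.
  by rewrite distrC; apply: H => //; apply: clamp01_lt; rewrite distrC.
have f0 : (arclen g \o clamp01) 0 = 0 by rewrite /= clamp01_id ?ler01 // (arclen0 g).
have f1 : (arclen g \o clamp01) 1 = L by rewrite /= clamp01_id ?ler01 // (arclen1 gL).
have L0 : 0 <= L by lra.
have := @IVT R (arclen g \o clamp01) 0 1 v ler01 (continuous_subspaceT fc).
rewrite f0 f1 (min_l L0) (max_r L0) v0 vL => /(_ isT) [c].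
by rewrite in_itv /= => /andP[c0 c1]; rewrite /= clamp01_id // => cv; exists c.
Qed.

Lemma arcparE g L s t : len_on dist g 0 1 = L%:E -> 0 <= t -> t <= 1 ->
  arclen g t = s -> arcpar dist g s = g t.
Proof.
move=> gL t0 t1 ts; rewrite /arcpar.
set P := [set u | _]; have : P (xget 0 P).
  by apply: xgetPex; exists t; rewrite /P /= t0 t1 (len_on0 gL) ?ts.
move=> [/andP[u0 u1] Pu]; apply: (eq_arclen_point gL) => //; first by rewrite u0 u1.
  by rewrite t0 t1.
by move: Pu; rewrite (len_on0 gL) // ts => -[].
Qed.

Lemma arcpar_lip g L s1 s2 : curve dist g -> len_on dist g 0 1 = L%:E ->
  0 <= s1 <= L -> 0 <= s2 <= L ->
  dist (arcpar dist g s1) (arcpar dist g s2) <= `|s1 - s2|.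
Proof.
move=> cg gL /andP[a0 a1] /andP[b0 b1].
have [t1 [t10 t11 E1]] := arclen_ivt cg gL a0 a1.
have [t2 [t20 t21 E2]] := arclen_ivt cg gL b0 b1.
rewrite (arcparE gL t10 t11 E1) (arcparE gL t20 t21 E2) -E1 -E2.
wlog t12 : t1 t2 t10 t11 t20 t21 {E1 E2} / t1 <= t2.
  move=> W; have [h|h] := leP t1 t2; first exact: W.
  by rewrite dist_sym distrC; apply: W => //; exact: ltW.
by rewrite distrC (le_trans (dist_le_arclen gL t10 t12 t21)) // ler_norm.
Qed.

Lemma arcpar_rev g L s : curve dist g -> len_on dist g 0 1 = L%:E -> 0 <= s -> s <= L ->
  arcpar dist (rev_curve g) s = arcpar dist g (L - s).
Proof.
move=> cg gL s0 sL.
have gL' : len_on dist (rev_curve g) 0 1 = L%:E by rewrite len_rev_curve.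
have [t [t0 t1 Et]] := arclen_ivt (curve_rev cg) gL' s0 sL.
have u0 : 0 <= 1 - t by lra.
have u1 : 1 - t <= 1 by lra.
rewrite (arcparE gL' t0 t1 Et); apply/esym/(arcparE gL u0 u1).
by rewrite -Et (arclen_rev gL t0 t1) subKr.
Qed.
(** * Constant-speed reparametrization *)

Definition const_speed g : R -> X := fun t => arcpar dist g (t * fine (len dist g)).

Section const_speed.
Variables (g : R -> X) (L : R).
Hypotheses (cg : curve dist g) (gL : len_on dist g 0 1 = L%:E).

Let L_ge0 : 0 <= L.
Proof. by have := len_on_ge0 g ler01; rewrite gL lee_fin. Qed.

Let const_speedE t : const_speed g t = arcpar dist g (t * L).
Proof. by rewrite /const_speed /len gL. Qed.

Let tL_itv t : 0 <= t <= 1 -> 0 <= t * L <= L.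
Proof. by case/andP => t0 t1; rewrite mulr_ge0 //= ler_piMl. Qed.

Lemma const_speed_lip s t : 0 <= s <= 1 -> 0 <= t <= 1 ->
  dist (const_speed g s) (const_speed g t) <= L * `|s - t|.
Proof.
move=> /tL_itv sI /tL_itv tI; rewrite !const_speedE.
apply: le_trans (arcpar_lip cg gL sI tI) _.
by rewrite -mulrBl normrM (ger0_norm L_ge0) mulrC.
Qed.

Lemma const_speed0 : const_speed g 0 = g 0.
Proof. by rewrite const_speedE mul0r (arcparE gL (lexx 0) ler01) // (arclen0 g). Qed.

Lemma const_speed1 : const_speed g 1 = g 1.
Proof. by rewrite const_speedE mul1r (arcparE gL ler01 (lexx 1)) // (arclen1 gL). Qed.

Lemma lipschitz_const_speed : lipschitz_curve dist (const_speed g).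
Proof. by exists L => s t; exact: const_speed_lip. Qed.

(* The lower bound transports subdivisions of [g] along [w |-> arclen g w / L]. *)
Lemma len_on_const_speed t : 0 <= t -> t <= 1 ->
  len_on dist (const_speed g) 0 t = (t * L)%:E.
Proof.
move=> t0 t1; apply/eqP; rewrite eq_le; apply/andP; split.
  rewrite mulrC -[X in L * X]subr0; apply: len_on_le_lipschitz => // u v u0 uv vt.
  have uI : 0 <= u <= 1 by rewrite u0 (le_trans uv (le_trans vt t1)).
  have vI : 0 <= v <= 1 by rewrite (le_trans u0 uv) (le_trans vt t1).
  by rewrite (le_trans (const_speed_lip uI vI)) // distrC ger0_norm ?subr_ge0.
have [->|L_neq0] := eqVneq L 0; first by rewrite mulr0 len_on_ge0.
have /andP[tL0 tLL] : 0 <= t * L <= L by apply: tL_itv; rewrite t0 t1.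
have [u [u0 u1 Eu]] := arclen_ivt cg gL tL0 tLL.
pose phi w := arclen g w / L.
have phi0 : phi 0 = 0 by rewrite /phi (arclen0 g) mul0r.
have phiu : phi u = t by rewrite /phi Eu mulfK.
rewrite -Eu -(len_on0 gL u0 u1) -[in X in (_ <= X)%E]phi0 -phiu.
apply: len_on_le_comp => //.
  move=> v w; rewrite !in_itv /= => /andP[v0 vu] /andP[_ wu] vw.
  by rewrite ler_wpM2r ?invr_ge0 // (arclen_le gL v0 vw (le_trans wu u1)).
move=> w; rewrite in_itv /= => /andP[w0 wu].
by rewrite const_speedE /phi divfK // (arcparE gL w0 (le_trans wu u1)).
Qed.

Lemma len_const_speed : len_on dist (const_speed g) 0 1 = L%:E.
Proof. by rewrite len_on_const_speed ?ler01 // mul1r. Qed.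

Lemma arcpar_const_speed s : 0 <= s -> s <= L ->
  arcpar dist (const_speed g) s = arcpar dist g s.
Proof.
move=> s0 sL; have [L0|L_neq0] := eqVneq L 0.
  have -> : s = 0 by apply/eqP; rewrite eq_le s0 -L0 sL.
  by rewrite (arcparE len_const_speed (lexx 0) ler01 (arclen0 _)) const_speed0
    (arcparE gL (lexx 0) ler01 (arclen0 _)).
have Lpos : 0 < L by rewrite lt_def L_neq0 L_ge0.
have t0 : 0 <= s / L by rewrite divr_ge0.
have t1 : s / L <= 1 by rewrite ler_pdivrMr // mul1r.
rewrite (arcparE len_const_speed t0 t1) ?const_speedE ?divfK //.
by rewrite /arclen len_on_const_speed // divfK.
Qed.

Lemma line_int_const_speed rho : line_int dist (const_speed g) rho = line_int dist g rho.
Proof.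
rewrite /line_int /len len_const_speed gL /=.
apply: eq_integral => s; rewrite inE /= in_itv /= => /andP[s0 sL].
by rewrite arcpar_const_speed.
Qed.

End const_speed.

Lemma lipschitz_curve_pos g : lipschitz_curve dist g -> exists2 K, 0 < K &
  forall s t, 0 <= s <= 1 -> 0 <= t <= 1 -> dist (g s) (g t) <= K * `|s - t|.
Proof.
move=> [K gK]; exists (`|K| + 1); first by rewrite ltr_wpDl.
move=> s t sI tI; apply: le_trans (gK s t sI tI) _.
by rewrite ler_wpM2r // (le_trans (ler_norm K)) // lerDl.
Qed.

Lemma lipschitz_curve_continuous g : lipschitz_curve dist g -> curve dist g.
Proof.
move=> /lipschitz_curve_pos [K K0 gK] t tI e e0.
exists (e / K); first by rewrite divr_gt0.
move=> s sI st; apply: le_lt_trans (gK s t sI tI) _.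
by rewrite mulrC -ltr_pdivlMr.
Qed.

Lemma lipschitz_curve_len g : lipschitz_curve dist g -> exists L, len_on dist g 0 1 = L%:E.
Proof.
move=> /lipschitz_curve_pos [K K0 gK].
have : (len_on dist g 0 1 <= (K * (1 - 0))%:E)%E.
  apply: len_on_le_lipschitz ler01 _ => u v u0 uv v1.
  have vu0 : 0 <= v - u by rewrite subr_ge0.
  rewrite dist_sym -(ger0_norm vu0); apply: gK; first by rewrite (le_trans u0 uv) v1.
  by rewrite u0 (le_trans uv v1).
have := len_on_ge0 g ler01.
by case: (len_on dist g 0 1) => [l| |] // _ _; exists l.
Qed.

Lemma lipschitz_curve_rev g : lipschitz_curve dist g -> lipschitz_curve dist (rev_curve g).
Proof.
move=> [K gK]; exists K => s t /andP[s0 s1] /andP[t0 t1]; rewrite /rev_curve.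
rewrite (_ : s - t = (1 - t) - (1 - s)); last by ring.
by rewrite distrC; apply: gK; apply/andP; split; lra.
Qed.

Lemma measurable_itv_preimage_open (a : R -> X) (L : R) (U : set X) :
  (forall s t, 0 <= s <= L -> 0 <= t <= L -> dist (a s) (a t) <= `|s - t|) ->
  open_d dist U -> measurable (`[0, L]%classic `&` a @^-1` U).
Proof.
move=> a_lip oU.
pose V := [set t : R | exists s, [/\ 0 <= s <= L, U (a s) &
  exists2 r, 0 < r & ball_d dist (a s) r `<=` U /\ `|s - t| < r]].
have oV : open V.
  rewrite openE => t [s [sI Us [r r0 [br st]]]].
  apply/nbhs_normP; exists (r - `|s - t|) => /=; first by rewrite subr_gt0.
  move=> t' tt'; exists s; split => //; exists r => //; split => //.
  apply: le_lt_trans (ler_distD t s t') _.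
  by move: tt'; rewrite distrC -ltrBrDl.
have -> : `[0, L]%classic `&` a @^-1` U = `[0, L]%classic `&` V.
  apply/seteqP; split => t [tI]; rewrite /= in tI *.
    move=> Ut; split => //; have [r r0 br] := oU _ Ut.
    by exists t; split => //; exists r => //; rewrite subrr normr0.
  move=> [s [sI Us [r r0 [br st]]]]; split => //; apply: br.
  exact: le_lt_trans (a_lip s t sI tI) st.
by apply: measurableI; [exact: measurable_itv | exact: open_measurable].
Qed.

Lemma measurable_fun_borel_comp (a : R -> X) (L : R) (rho : X -> \bar R) :
  borel_fun dist rho ->
  (forall s t, 0 <= s <= L -> 0 <= t <= L -> dist (a s) (a t) <= `|s - t|) ->
  measurable_fun `[0, L] (rho \o a).
Proof.
move=> brho a_lip _ B mB; rewrite comp_preimage.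
suff : borel_d dist `<=` [set A | measurable (`[0, L]%classic `&` a @^-1` A)].
  by apply; exact: brho.
apply: smallest_sub; last by move=> U oU; exact: measurable_itv_preimage_open.
split.
- by rewrite /= preimage_set0 setI0.
- move=> A mA; rewrite /= setTD preimage_setC -setDE.
  rewrite (_ : _ `\` _ = `[0, L]%classic `\` (`[0, L]%classic `&` a @^-1` A)).
    by apply: measurableD => //; exact: measurable_itv.
  by rewrite setDIr setDv set0U.
- move=> A mA; rewrite /= preimage_bigcup setI_bigcupr.
  by apply: bigcup_measurable => k _; exact: mA.
Qed.

Lemma line_int_rev g rho : lipschitz_curve dist g -> borel_fun dist rho ->
  (forall x, 0 <= rho x)%E -> line_int dist (rev_curve g) rho = line_int dist g rho.
Proof.
move=> lg brho rho0.
have cg := lipschitz_curve_continuous lg.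
have [L gL] := lipschitz_curve_len lg.
rewrite /line_int /len len_rev_curve gL /=.
transitivity (\int[lebesgue_measure]_(s in `[0%R, L]) (rho \o arcpar dist g) (L - s)%R)%E.
  apply: eq_integral => s; rewrite inE /= in_itv /= => /andP[s0 sL].
  by rewrite /= (arcpar_rev cg gL s0 sL).
apply: ge0_integral_reflect => [|s]; last exact: rho0.
apply: measurable_fun_borel_comp brho _ => s t /andP[s0 s1] /andP[t0 t1].
by apply: (arcpar_lip cg gL); rewrite ?s0 ?t0.
Qed.
(** * Modulus, essential length and the distance [dp] *)

Variables (mu : {outer_measure set X -> \bar R}) (p : \bar R) (C : R).
Hypothesis mu_ball_gt0 : forall x r, 0 < r -> (0 < mu (ball_d dist x r))%E.

(* For the zero measure every [ess_sup] is [-oo], and [Mod_ge0] fails for [p = +oo]. *)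
Lemma mu_setT_gt0 : (0 < mu setT)%E.
Proof. by apply: lt_le_trans (mu_ball_gt0 point ltr01) _; exact: le_outer_measure. Qed.

Lemma Mod_ge0 Gam : (0 <= Mod dist mu p Gam)%E.
Proof.
apply: le_ereal_inf_tmp => _ [rho [[rho0 _ _] ->]]; case: ifP => _.
  rewrite -[leLHS](ess_sup_cst (mu := mu : set (caratheodory_type mu) -> \bar R)
    _ mu_setT_gt0).
  by apply: le_ess_sup; apply: aeW => x; exact: rho0.
by apply: integral_ge0 => x _; exact: poweR_ge0.
Qed.

Lemma borel_fun_cst (c : \bar R) : borel_fun dist (cst c).
Proof.
move=> B mB; rewrite preimage_cst; case: ifP => _.
  by move=> G [[G0 GC _] _]; have := GC set0 G0; rewrite setD0.
by move=> G [[G0 _ _] _].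
Qed.

Hypothesis p_gt0 : (0 < p)%E.

Lemma Mod_set0 : Mod dist mu p set0 = 0%E.
Proof.
apply/eqP; rewrite eq_le Mod_ge0 andbT; apply: ereal_inf_lbound.
exists (cst 0%E); split; first by split => //; exact: borel_fun_cst.
case: ifP => [_|p_fin]; first by rewrite (ess_sup_cst _ mu_setT_gt0).
have fp_neq0 : fine p != 0.
  by rewrite gt_eqF // fine_gt0 // p_gt0 ltey p_fin.
rewrite (eq_integral (cst 0%E)) ?integral0 // => x _.
by rewrite /cst /=; apply: poweR0r.
Qed.

Lemma le_Mod Gam Gam' : (forall rho, admissible dist Gam' rho -> admissible dist Gam rho) ->
  (Mod dist mu p Gam <= Mod dist mu p Gam')%E.
Proof.
move=> adm; apply: ereal_inf_le_tmp => _ [rho [rhoGam' ->]].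
by exists rho; split => //; exact: adm.
Qed.

Lemma le_essl Gam Gam' : Gam `<=` Gam' -> (essl dist mu p Gam' <= essl dist mu p Gam)%E.
Proof.
move=> GamGam'; apply: ge_ereal_sup => _ [Gam0 [Gam0_null ->]].
apply: le_trans (_ : ereal_inf [set len dist g | g in Gam `\` Gam0] <= _)%E.
  apply: ereal_inf_le_tmp => _ [g [gGam gGam0] <-].
  by exists g => //; split => //; exact: GamGam'.
by apply: ereal_sup_ubound; exists Gam0.
Qed.

Lemma inf_len_le_essl Gam : (ereal_inf [set len dist g | g in Gam] <= essl dist mu p Gam)%E.
Proof.
apply: le_trans (_ : ereal_inf [set len dist g | g in Gam `\` set0] <= _)%E.
  by rewrite setD0.
by apply: ereal_sup_ubound; exists set0; split => //; exact: Mod_set0.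
Qed.

Hypothesis mu_borel : forall B, borel_d dist B -> mu.-caratheodory B.
Hypothesis C_gt0 : 0 < C.
Hypothesis thick : thick_quasiconvex dist mu p C.

Lemma borel_cball x r : borel_d dist (cball_d dist x r).
Proof.
pose U := [set y | r < dist x y].
have oU : open_d dist U.
  move=> y Uy; exists (dist x y - r); first by rewrite subr_gt0.
  move=> z; rewrite /ball_d /U /= => yz.
  by have := dist_triangle x z y; rewrite (dist_sym z y); lra.
have -> : cball_d dist x r = ~` U.
  by apply/seteqP; split => z; rewrite /cball_d /U /= leNgt => /negP.
by move=> M [[M0 MC MU] GM]; rewrite -setTD; apply: MC; apply: GM.
Qed.

Lemma mu_cball_gt0 x r : 0 < r -> (0 < mu (cball_d dist x r))%E.
Proof.
move=> r0; apply: lt_le_trans (mu_ball_gt0 x r0) _; apply: le_outer_measure.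
by move=> z; rewrite /ball_d /cball_d /=; exact: ltW.
Qed.

Lemma GamC_rectifiable E F g : GamC dist E F C g -> exists L, len_on dist g 0 1 = L%:E.
Proof.
move=> [_ _ _]; rewrite /len; have := len_on_ge0 g ler01.
by case: (len_on dist g 0 1) => [l| |] // _ _; exists l.
Qed.

(* Reparametrizing preserves line integrals, so a null family containing every
   [const_speed g] would force [Mod (GamC E F C) = 0]. *)
Lemma GamC_const_speed_notin E F Gam0 :
  mu.-caratheodory E -> mu.-caratheodory F -> (0 < mu E)%E -> (0 < mu F)%E ->
  Mod dist mu p Gam0 = 0%E -> exists2 g, GamC dist E F C g & ~ Gam0 (const_speed g).
Proof.
move=> cE cF mE mF Gam0_null; apply: contrapT => no_g.
have Gam0_GamC g : GamC dist E F C g -> Gam0 (const_speed g).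
  by move=> Gg; apply: contrapT => nG; apply: no_g; exists g.
have : (Mod dist mu p (GamC dist E F C) <= Mod dist mu p Gam0)%E.
  apply: le_Mod => rho [rho0 brho rho_adm]; split => // g Gg.
  have [L gL] := GamC_rectifiable Gg; have [cg _ _ _] := Gg.
  by rewrite -(line_int_const_speed cg gL); apply: rho_adm; exact: Gam0_GamC.
by rewrite Gam0_null leNgt thick.
Qed.

Definition essl_cball x y (del : R) : \bar R :=
  essl dist mu p (GamL dist (cball_d dist x del) (cball_d dist y del)).

Lemma essl_cball_ge x y del : ((dist x y - 2 * del)%:E <= essl_cball x y del)%E.
Proof.
apply: le_trans (inf_len_le_essl _); apply: le_ereal_inf_tmp => _ [g [_ g0 g1] <-].
apply: le_trans (dist_le_len_on g ler01); rewrite lee_fin.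
move: g0 g1; rewrite /cball_d /= => g0 g1.
by have := dist_triangle x (g 0) y; have := dist_triangle (g 0) (g 1) y;
  rewrite (dist_sym (g 1) y); lra.
Qed.

Lemma essl_cball_le x y del : 0 < del ->
  (essl_cball x y del <= (C * (dist x y + 2 * del))%:E)%E.
Proof.
move=> del0; apply: ge_ereal_sup => _ [Gam0 [Gam0_null ->]].
have [g Gg notGam0] := GamC_const_speed_notin (mu_borel (borel_cball x del))
  (mu_borel (borel_cball y del)) (mu_cball_gt0 x del0) (mu_cball_gt0 y del0) Gam0_null.
have [L gL] := GamC_rectifiable Gg; have [cg g0 g1 glen] := Gg.
apply: le_trans (_ : len dist (const_speed g) <= _)%E.
  apply: ereal_inf_lbound; exists (const_speed g) => //; split => //.
  by split; [exact: lipschitz_const_speed gL | rewrite (const_speed0 gL) |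
    rewrite (const_speed1 gL)].
rewrite /len (len_const_speed cg gL) -gL; apply: le_trans glen _.
rewrite lee_fin ler_wpM2l ?(ltW C_gt0) //; move: g0 g1; rewrite /cball_d /= => g0 g1.
by have := dist_triangle (g 0) x (g 1); have := dist_triangle x y (g 1);
  rewrite (dist_sym (g 0) x); lra.
Qed.

Lemma essl_cball_nonincr x y :
  {in `]0, +oo[ &, {homo essl_cball x y : a b / a <= b >-> (b <= a)%E}}.
Proof.
move=> a b _ _ ab; apply: le_essl => g [lg g0 g1]; split => //.
  by move: g0; rewrite /cball_d /= => /le_trans; apply.
by move: g1; rewrite /cball_d /= => /le_trans; apply.
Qed.

Lemma dp'E x y : dp' dist mu p x y = ereal_sup (essl_cball x y @` `]0, +oo[%classic).
Proof.
apply: cvg_lim => //.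
exact: nonincreasing_at_right_cvge _ _ (essl_cball_nonincr x y).
Qed.

Lemma dist_le_dp' x y : ((dist x y)%:E <= dp' dist mu p x y)%E.
Proof.
rewrite dp'E; apply/lee_addgt0Pr => e e0.
have e2 : 0 < e / 2 by rewrite divr_gt0.
have : (essl_cball x y (e / 2) <= ereal_sup (essl_cball x y @` `]0%R, +oo[%classic))%E.
  by apply: ereal_sup_ubound; exists (e / 2) => //=; rewrite in_itv /= e2.
move=> /(le_trans (essl_cball_ge x y (e / 2)))/(leeD2r e%:E).
by rewrite -EFinD mulrC divfK ?pnatr_eq0 // subrK.
Qed.

Lemma dp'_le x y : (dp' dist mu p x y <= (C * dist x y)%:E)%E.
Proof.
rewrite dp'E; apply: ge_ereal_sup => _ [del delI <-].
have del0 : 0 < del by move: delI; rewrite /= in_itv /= andbT.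
apply/lee_addgt0Pr => e e0.
pose del' := Num.min del (e / (2 * C)).
have del'0 : 0 < del' by rewrite lt_min del0 divr_gt0 // mulr_gt0.
have del'e : del' * (2 * C) <= e by rewrite -ler_pdivlMr ?mulr_gt0 // ge_min lexx orbT.
apply: le_trans (_ : essl_cball x y del' <= _)%E.
  by apply: essl_cball_nonincr; rewrite ?in_itv /= ?andbT // ge_min lexx.
apply: le_trans (essl_cball_le x y del'0) _.
by rewrite -EFinD lee_fin; nra.
Qed.

(* Reversal maps a null family to a null family, since it preserves line integrals. *)
Lemma essl_GamL_rev_le E F :
  (essl dist mu p (GamL dist E F) <= essl dist mu p (GamL dist F E))%E.
Proof.
apply: ge_ereal_sup => _ [Gam0 [Gam0_null ->]].
pose Gam1 := [set g | GamL dist F E g /\ Gam0 (rev_curve g)].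
have Gam1_null : Mod dist mu p Gam1 = 0%E.
  apply/eqP; rewrite eq_le Mod_ge0 andbT -Gam0_null.
  apply: le_Mod => rho [rho0 brho rho_adm]; split => // g [[lg _ _] Gam0g].
  by rewrite -(line_int_rev lg brho rho0); exact: rho_adm.
apply: le_trans (_ : ereal_inf [set len dist g | g in GamL dist F E `\` Gam1] <= _)%E.
  apply: le_ereal_inf_tmp => _ [g [[lg g0 g1] notGam1] <-].
  rewrite -[len dist g]len_rev_curve; apply: ereal_inf_lbound; exists (rev_curve g) => //.
  split; last by move=> Gam0g; apply: notGam1.
  by split; [exact: lipschitz_curve_rev | rewrite /rev_curve subr0 | rewrite /rev_curve subrr].
by apply: ereal_sup_ubound; exists Gam1.
Qed.

Lemma dp'C x y : dp' dist mu p x y = dp' dist mu p y x.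
Proof.
suff le_dp' a b : (dp' dist mu p a b <= dp' dist mu p b a)%E.
  by apply/eqP; rewrite eq_le !le_dp'.
rewrite !dp'E; apply: ge_ereal_sup => _ [del delI <-].
by apply: le_trans (essl_GamL_rev_le _ _) _; apply: ereal_sup_ubound; exists del.
Qed.

Lemma dist_le_chain n (xs : nat -> X) :
  ((dist (xs 0%N) (xs n))%:E <= \sum_(i < n) dp' dist mu p (xs i) (xs i.+1))%E.
Proof.
elim: n => [|n IH]; first by rewrite big_ord0 dist_refl.
rewrite big_ord_recr /=; apply: le_trans (leeD IH (dist_le_dp' _ _)).
by rewrite -EFinD lee_fin dist_triangle.
Qed.

Lemma dist_le_dp x y : ((dist x y)%:E <= dp dist mu p x y)%E.
Proof.
apply: le_ereal_inf_tmp => _ [n [xs [_ <- <- ->]]]; exact: dist_le_chain.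
Qed.

Lemma dp_le_dp' x y : (dp dist mu p x y <= dp' dist mu p x y)%E.
Proof.
apply: ereal_inf_lbound; exists 1%N, (fun i => if i == 0%N then x else y).
by split => //; rewrite big_ord1.
Qed.

Lemma dp_le x y : (dp dist mu p x y <= (C * dist x y)%:E)%E.
Proof. exact: le_trans (dp_le_dp' x y) (dp'_le x y). Qed.

Lemma dp_fin x y : dp dist mu p x y \is a fin_num.
Proof.
have := dist_le_dp x y; have := dp_le x y.
by case: (dp dist mu p x y).
Qed.

Lemma dpC x y : dp dist mu p x y = dp dist mu p y x.
Proof.
suff le_dp a b : (dp dist mu p b a <= dp dist mu p a b)%E.
  by apply/eqP; rewrite eq_le !le_dp.
apply: ereal_inf_le_tmp => _ [n [xs [n0 xs0 xsn ->]]].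
exists n, (fun i => xs (n - i)%N); split; rewrite ?subn0 ?subnn //.
rewrite -(big_mkord xpredT (fun i => dp' dist mu p (xs i) (xs i.+1))) big_rev_mkord subn0.
by apply: eq_bigr => i _; rewrite subnSK // dp'C.
Qed.

(* Concatenate two almost optimal chains. *)
Lemma dp_triangle x y z : (dp dist mu p x z <= dp dist mu p x y + dp dist mu p y z)%E.
Proof.
rewrite -(fineK (dp_fin x y)) -(fineK (dp_fin y z)); apply/lee_addgt0Pr => e e0.
have e2 : 0 < e / 2 by rewrite divr_gt0.
have : (dp dist mu p x y < (fine (dp dist mu p x y) + e / 2)%:E)%E.
  by rewrite -[ltLHS](fineK (dp_fin x y)) lte_fin ltrDl.
move/ereal_inf_lt => [_ [n1 [xs [n10 xs0 xsn1 ->]]] xs_lt].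
have : (dp dist mu p y z < (fine (dp dist mu p y z) + e / 2)%:E)%E.
  by rewrite -[ltLHS](fineK (dp_fin y z)) lte_fin ltrDl.
move/ereal_inf_lt => [_ [n2 [ys [n20 ys0 ysn2 ->]]] ys_lt].
pose zs i := if (i <= n1)%N then xs i else ys (i - n1)%N.
have zs_r j : zs (n1 + j)%N = ys j.
  case: j => [|j]; first by rewrite /zs addn0 leqnn xsn1 ys0.
  by rewrite /zs addnS ltnNge leq_addr /= -addnS addKn.
have zs_sum : (\sum_(i < n1 + n2) dp' dist mu p (zs i) (zs i.+1) =
    \sum_(i < n1) dp' dist mu p (xs i) (xs i.+1) +
    \sum_(i < n2) dp' dist mu p (ys i) (ys i.+1))%E.
  rewrite big_split_ord; congr (_ + _)%E; apply: eq_bigr => i _ /=.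
    by rewrite /zs (ltnW (ltn_ord i)) (ltn_ord i).
  by rewrite -addnS !zs_r.
apply: le_trans (_ : \sum_(i < n1 + n2) dp' dist mu p (zs i) (zs i.+1) <= _)%E.
  apply: ereal_inf_lbound; exists (n1 + n2)%N, zs.
  by split; rewrite ?addn_gt0 ?n10 ?zs_r // /zs /= xs0.
rewrite zs_sum; apply: ltW; apply: lt_le_trans (lteD xs_lt ys_lt) _.
by rewrite -!EFinD lee_fin; lra.
Qed.

Lemma dp_metric : is_metric_e (dp dist mu p).
Proof.
split; [exact: dp_fin | | | exact: dpC | exact: dp_triangle].
- by move=> x y; apply: le_trans (dist_le_dp x y); rewrite lee_fin.
- move=> x y; split => [dp0|<-].
    have := dist_le_dp x y; rewrite dp0 lee_fin => dist_le0.
    by apply: dist_sep; apply/eqP; rewrite eq_le dist_le0 dist_ge0.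
  have := dp_le x x; have := dist_le_dp x x; rewrite dist_refl mulr0.
  by move=> dp_ge0 dp_le0; apply/eqP; rewrite eq_le dp_ge0 dp_le0.
Qed.

End metric_curves.

Theorem lemma5p8 (R : realType) (X : pointedType) (dist : X -> X -> R)
    (mu : {outer_measure set X -> \bar R}) (p : \bar R) (C : R) :
  (1 <= p)%E -> 1 <= C ->
  metric_measure_space dist mu ->
  thick_quasiconvex dist mu p C ->
  is_metric_e (dp dist mu p) /\
  (forall x y : X, ((dist x y)%:E <= dp dist mu p x y)%E /\
                   (dp dist mu p x y <= (C * dist x y)%:E)%E).
Proof.
move=> p_ge1 C_ge1 [[dist_ge0 dist_eq0 dist_sym dist_triangle] _ [mu_borel _] mu_ball] thick.
have dist_refl x : dist x x = 0 by apply/dist_eq0.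
have dist_sep x y : dist x y = 0 -> x = y by move/dist_eq0.
have p_gt0 : (0 < p)%E by apply: lt_le_trans p_ge1.
have C_gt0 : 0 < C by apply: lt_le_trans C_ge1.
have mu_ball_gt0 x r : 0 < r -> (0 < mu (ball_d dist x r))%E.
  by move=> r0; case/andP: (mu_ball x r r0).
split.
  exact: (dp_metric dist_ge0 dist_sym dist_triangle dist_refl dist_sep
    mu_ball_gt0 p_gt0 mu_borel C_gt0 thick).
move=> x y; split.
  exact: (dist_le_dp dist_sym dist_triangle dist_refl mu_ball_gt0 p_gt0).
exact: (dp_le dist_ge0 dist_sym dist_triangle dist_refl dist_sep
  mu_ball_gt0 mu_borel C_gt0 thick).
Qed.
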